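(* For every positive integer $n$ and every pseudo-composition $\alpha$ of $n$, the type $B$ ribbon number $r^B_\alpha$ is odd; equivalently $c^B_{2,0}(n)=0$ and $c^B_{2,1}(n)=2^n$.
   Context: A signed permutation of $[n]$ is a bijection $w$ of $\{\pm1,\ldots,\pm n\}$ with $w(-i)=-w(i)$; these form $\mathfrak{S}^B_n$. With $w(0):=0$, $D(w)=\{i\in\{0,\ldots,n-1\}: w(i)>w(i+1)\}$. A pseudo-composition of $n$ ($\alpha\models_0 n$) is a sequence $(\alpha_1,\ldots,\alpha_\ell)$ of integers with $\alpha_1\ge0$, $\alpha_2,\ldots,\alpha_\ell>0$ and sum $n$, with $D(\alpha)=\{\alpha_1,\alpha_1+\alpha_2,\ldots,\alpha_1+\cdots+\alpha_{\ell-1}\}$. Then $r^B_\alpha=|\{w\in\mathfrak{S}^B_n: D(w)=D(\alpha)\}|$ and $c^B_{p,i}(n)=|\{\alpha\models_0 n: r^B_\alpha\equiv i\pmod p\}|$. There are $2^n$ pseudo-compositions of $n$. *)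

From mathcomp Require Import all_boot all_order ssralg ssrnum ssrint perm.
Set Implicit Arguments. Unset Strict Implicit. Unset Printing Implicit Defensive.
Import GRing.Theory Num.Theory.

(* The signed alphabet {±1,...,±n}: the pair (i, b) with i : 'I_n encodes
   the integer -(i+1) if b = true and +(i+1) if b = false. *)
Definition sidx (n : nat) := ('I_n * bool)%type.

Definition sval (n : nat) (x : sidx n) : int :=
  if x.2 then (- Posz x.1.+1)%R else Posz x.1.+1.

Definition sneg (n : nat) (x : sidx n) : sidx n := (x.1, ~~ x.2).

Definition signed_perm (n : nat) (w : {perm sidx n}) : bool :=
  [forall x : sidx n, w (sneg x) == sneg (w x)].

(* w(k) as an integer for k in {0,...,n}, with w(0) := 0 *)
Definition wval (n : nat) (w : {perm sidx n}) (k : nat) : int :=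
  if k is k'.+1 then
    (if insub k' : option 'I_n is Some i then sval (w (i, false)) else 0%R)
  else 0%R.

Definition descB (n : nat) (w : {perm sidx n}) : {set 'I_n} :=
  [set i : 'I_n | (wval w i.+1 < wval w i)%R].

Definition pseudo_comp (n : nat) (a : seq nat) : bool :=
  [&& 0 < size a, all (fun x => 0 < x) (behead a) & sumn a == n].

(* D(alpha) = {a_1, a_1+a_2, ..., a_1+...+a_{l-1}} as a subset of {0..n-1} *)
Definition descC (n : nat) (a : seq nat) : {set 'I_n} :=
  [set i : 'I_n | val i \in [seq sumn (take k a) | k <- iota 1 (size a).-1]].

Definition rB (n : nat) (a : seq nat) : nat :=
  #|[set w : {perm sidx n} | signed_perm w & descB w == descC n a]|.

Fixpoint seqs_of (m k : nat) : seq (seq nat) :=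
  if k is k'.+1 then [seq x :: s | x <- iota 0 m, s <- seqs_of m k'] else [:: [::]].

(* A duplicate-free finite list containing every pseudo-composition of n:
   all sequences of length 1..n+1 with entries in {0..n}. *)
Definition pc_candidates (n : nat) : seq (seq nat) :=
  flatten [seq seqs_of n.+1 k | k <- iota 1 n.+1].

Definition cB (p i n : nat) : nat :=
  count (fun a => pseudo_comp n a && (rB n a == i %[mod p])) (pc_candidates n).

(* Fix a descent set.  For a signed permutation w that is not of the form
   w(j) = +-j, let i + 1 be the least j with |w(j)| <> j.  Then +-(i + 1) sits
   at a position beyond i + 1, and both its neighbours have absolute value
   larger than i + 1, so flipping its sign is an involution that preserves
   the descent set.  The fixed points satisfy |w(j)| = j, and then w(j) < 0
   exactly when j - 1 is a descent: there is one for each descent set, so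
   every r^B_alpha is odd.  A pseudo-composition of n is a first part
   a_1 <= n followed by a composition of t = n - a_1; as t has 2^(t-1)
   compositions for t > 0 and one for t = 0, there are
   1 + (1 + 2 + ... + 2^(n-1)) = 2^n pseudo-compositions. *)

From Pilot Require Import Defs.
From mathcomp Require Import all_boot all_order ssralg ssrnum ssrint perm.
From mathcomp Require Import fingroup action pgroup cyclic sylow zify lra.
Set Implicit Arguments. Unset Strict Implicit. Unset Printing Implicit Defensive.
Import Order.TTheory GRing.Theory Num.Theory.

Lemma count_allpairs_cons (T : Type) (P : pred (seq T)) (xs : seq T) (L : seq (seq T)) :
  count P [seq x :: s | x <- xs, s <- L] = \sum_(x <- xs) count (fun s => P (x :: s)) L.
Proof.
elim: xs => [|x xs IH]; first by rewrite big_nil.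
by rewrite /= count_cat big_cons IH count_map.
Qed.

Definition ncomp (m l t : nat) : nat :=
  count (fun s => all (fun x => 0 < x) s && (sumn s == t)) (seqs_of m l).

Lemma ncomp0 m t : ncomp m 0 t = (t == 0).
Proof. by case: t. Qed.

Lemma ncompS m l t : ncomp m l.+1 t = \sum_(0 <= x < m | 0 < x <= t) ncomp m l (t - x).
Proof.
rewrite /ncomp /= count_allpairs_cons /index_iota subn0 [RHS]big_mkcond /=.
apply: eq_bigr => x _; case: ifP => [/andP[x0 xt] | xt].
  by apply: eq_count => s /=; rewrite x0 /=; congr (_ && _); apply/eqP/eqP; lia.
rewrite (@eq_count _ _ pred0) ?count_pred0 // => s /=.
by apply/negbTE/negP => /andP[/andP[x0 _] /eqP st]; move: xt; rewrite x0 /=; lia.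
Qed.

Lemma expn2_pred_sum t : 2 ^ t.-1 = (t == 0) + \sum_(0 <= y < t) 2 ^ y.-1.
Proof.
elim: t => [|t IH]; first by rewrite big_geq.
rewrite big_nat_recr //= add0n; case: t IH => [|t] IH; first by rewrite big_geq.
by rewrite /= add0n in IH; rewrite -IH expnS mul2n addnn.
Qed.

Lemma sum_ncomp m L t : t < m -> t < L -> \sum_(l < L) ncomp m l t = 2 ^ t.-1.
Proof.
elim/ltn_ind: t L => t IH [|L] // tm tL.
rewrite big_ord_recl ncomp0 expn2_pred_sum /=; congr (_ + _).
under eq_bigr do rewrite ncompS.
rewrite exchange_big /=.
transitivity (\sum_(0 <= x < m | 0 < x <= t) 2 ^ (t - x).-1).
  by apply: eq_bigr => x /andP[x0 xt]; rewrite IH //; lia.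
rewrite (eq_bigl (fun x => (0 < x) && (x < t.+1))); last by move=> x; lia.
rewrite -(big_nat_widen 0 t.+1 m) // big_mkcond big_nat_recl //= add0n.
rewrite (big_nat_rev _ _ 0 t) /=.
by apply: eq_big_nat => y /andP[_ yt]; rewrite add0n; congr (2 ^ _.-1); lia.
Qed.

Lemma count_pseudo_comp n : count (pseudo_comp n) (pc_candidates n) = 2 ^ n.
Proof.
rewrite /pc_candidates count_flatten -map_comp sumnE big_map.
rewrite -[iota 1 n.+1]/(index_iota 1 n.+2) big_add1 succnK.
transitivity (\sum_(0 <= l < n.+1) \sum_(0 <= x < n.+1) ncomp n.+1 l (n - x)).
  apply: eq_bigr => l _.
  rewrite /comp (count_allpairs_cons _ (iota 0 n.+1) (seqs_of n.+1 l)) /index_iota subn0.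
  apply: eq_big_seq => x; rewrite mem_iota => /andP[_ xn].
  apply: eq_count => s /=; rewrite /pseudo_comp /=.
  by congr (_ && _); apply/eqP/eqP; lia.
rewrite exchange_big /=.
transitivity (\sum_(0 <= x < n.+1) 2 ^ (n - x).-1).
  by apply: eq_big_nat => x /andP[_ xn]; rewrite big_mkord sum_ncomp //; lia.
rewrite (big_nat_rev _ _ 0 n.+1) (expn2_pred_sum n.+1) add0n.
by apply: eq_big_nat => y /andP[_ yn]; congr (2 ^ _.-1); lia.
Qed.

Section OppLtNorm.
Local Open Scope ring_scope.
Variable R : realDomainType.
Implicit Types a b : R.

Lemma ltrNl_norm a b : `|a| < `|b| -> (- a < b) = (a < b).
Proof.
have := ler_norm a; have := ler_norm (- a); rewrite normrN.
have [b0|b0] := leP 0 b; [rewrite (ger0_norm b0) | rewrite (ltr0_norm b0)] => h1 h2 h;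
  by apply/idP/idP => ?; lra.
Qed.

Lemma ltrNr_norm a b : `|b| < `|a| -> (a < - b) = (a < b).
Proof. by move=> h; rewrite ltrNr -(ltrN2 b) ltrNl_norm ?normrN. Qed.
End OppLtNorm.

Section Involution.
Local Open Scope group_scope.

(* [f] generates a 2-group, whose numbers of points and of fixed points
   agree modulo 2. *)
Lemma odd_card_involution (T : finType) (f : T -> T) (A : {set T}) :
  involutive f -> {in A, forall x, f x \in A} ->
  odd #|A| = odd #|[set x in A | f x == x]|.
Proof.
move=> fK fA; pose s := perm (inv_inj fK).
have s2 : 2.-group <[s]>.
  apply: pnat_dvd (pnat_id (isT : prime 2)); rewrite order_dvdn.
  by apply/eqP/permP => x; rewrite expgS expg1 perm1 permM !permE fK.
have sA : [acts <[s]>, on A | 'P].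
  rewrite cycle_subG !inE /=; apply/subsetP => x xA; rewrite inE /= /aperm permE; exact: fA.
have := pgroup_fix_mod s2 sA => /(congr1 odd); rewrite !odd_mod // => ->; congr odd.
by apply: eq_card => x; rewrite afix_cycle !inE sub1set inE /= /aperm permE.
Qed.
End Involution.

Section SignedPerm.
Variable n : nat.
Implicit Types (w : {perm sidx n}) (i j k : 'I_n) (x y : sidx n) (S : {set 'I_n}).

Lemma signed_permN w x : signed_perm w -> w (sneg x) = sneg (w x).
Proof. by move/forallP/(_ x)/eqP. Qed.

(* |w(i + 1)| = wabs w i + 1 *)
Definition wabs w i : 'I_n := (w (i, false)).1.

Lemma wabs_inj w : signed_perm w -> injective (wabs w).
Proof.
move=> sw j k; rewrite /wabs => e; have [e2|ne2] := eqVneq (w (j, false)).2 (w (k, false)).2.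
  suff /perm_inj [] : w (j, false) = w (k, false) by [].
  by apply/eqP; rewrite -pair_eqE /= e e2 !eqxx.
suff /perm_inj [] : w (k, false) = w (sneg (j, false)) by [].
rewrite signed_permN //; apply/eqP; rewrite -pair_eqE /= e eqxx /=.
by move: ne2; case: (w (j, false)).2; case: (w (k, false)).2.
Qed.

(* Permutations compose left to right, so [w * sign_flip i] is w followed by
   the sign change of the value +-(i + 1). *)
Definition sign_flip i : {perm sidx n} := tperm (i, false) (i, true).

Lemma sign_flipE i y : sign_flip i y = if y.1 == i then sneg y else y.
Proof.
case: y => m b /=; have [->|ne] := eqVneq m i; first by case: b; rewrite ?tpermL ?tpermR.
by rewrite tpermD // -pair_eqE /= negb_and eq_sym ne.
Qed.

Lemma wabs_mul_flip w i : wabs (w * sign_flip i)%g =1 wabs w.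
Proof. by move=> j; rewrite /wabs permM sign_flipE; case: ifP. Qed.

Lemma signed_perm_mul_flip w i : signed_perm w -> signed_perm (w * sign_flip i)%g.
Proof.
move=> sw; apply/forallP => x; rewrite !permM signed_permN // !sign_flipE /=.
by case: ifP.
Qed.

Definition first_moved w i :=
  (wabs w i != i) && [forall j : 'I_n, (j < i)%N ==> (wabs w j == j)].

Lemma first_moved_mul_flip w i : first_moved (w * sign_flip i)%g =1 first_moved w.
Proof.
by move=> j; rewrite /first_moved !wabs_mul_flip; under eq_forallb do rewrite wabs_mul_flip.
Qed.

Lemma first_moved_lt w i k : first_moved w i -> wabs w k = i -> (i < k)%N.
Proof.
case/andP=> ni /forallP mini e; case: (ltngtP i k) => // c.
  by move: (mini k); rewrite c e => /eqP ik; rewrite ik ltnn in c.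
by move: ni; rewrite (val_inj c) e (val_inj c) eqxx.
Qed.

Lemma first_moved_gt w i k k' : signed_perm w -> first_moved w i ->
  wabs w k = i -> k' != k -> (i <= k')%N -> (i < wabs w k')%N.
Proof.
move=> sw /andP[_ /forallP mini] e nk ik'; case: (ltngtP i (wabs w k')) => // c.
  have /eqP fm := implyP (mini (wabs w k')) c.
  by move: c; rewrite (wabs_inj sw fm) ltnNge ik'.
by move: nk; rewrite (wabs_inj sw (etrans e (val_inj c))) eqxx.
Qed.

Definition toggle w :=
  if [pick i | first_moved w i] is Some i then (w * sign_flip i)%g else w.

Lemma toggleK : involutive toggle.
Proof.
move=> w; rewrite {2}/toggle; case E: [pick i | first_moved w i] => [i|].
  by rewrite /toggle (eq_pick (first_moved_mul_flip w i)) E -mulgA tperm2 mulg1.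
by rewrite /toggle E.
Qed.

Lemma signed_perm_toggle w : signed_perm w -> signed_perm (toggle w).
Proof. by rewrite /toggle; case: pickP => // i _; apply: signed_perm_mul_flip. Qed.

Local Open Scope ring_scope.
Local Notation sval := Defs.sval.

Lemma svalN x : sval (sneg x) = - sval x.
Proof. by case: x => m [] /=; rewrite /sval /= ?opprK. Qed.

Lemma normr_sval x : `|sval x| = (x.1).+1%:Z.
Proof. by case: x => m [] /=; rewrite /sval /= ?normrN. Qed.

Lemma wval0 w : wval w 0 = 0.
Proof. by []. Qed.

Lemma wvalS w k : wval w k.+1 = sval (w (k, false)).
Proof. by rewrite /wval valK. Qed.

Lemma normr_wvalS w k : `|wval w k.+1| = (wabs w k).+1%:Z.
Proof. by rewrite wvalS normr_sval. Qed.

Lemma wval_mul_flip w i (k : nat) :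
  wval (w * sign_flip i)%g k = if `|wval w k| == i.+1%:Z then - wval w k else wval w k.
Proof.
case: k => [|k]; first by rewrite !wval0; case: eqP; rewrite ?oppr0.
rewrite /wval; case: insubP => [j _ _|_]; last by case: eqP; rewrite ?oppr0.
by rewrite permM sign_flipE normr_sval eqz_nat eqSS val_eqE; case: ifP; rewrite ?svalN.
Qed.

Lemma first_moved_neighbors w i k : signed_perm w -> first_moved w i ->
  (`|wval w k.+1| = i.+1%:Z -> i.+1%:Z < `|wval w k|) /\
  (`|wval w k| = i.+1%:Z -> i.+1%:Z < `|wval w k.+1|).
Proof.
move=> sw mi; have absE j : (`|wval w j.+1| = i.+1%:Z) -> wabs w j = i.
  by rewrite normr_wvalS => /eqP; rewrite eqz_nat eqSS => /eqP /val_inj.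
case: k => -[|q] hq; set k := Ordinal hq.
  split=> [/absE /(first_moved_lt mi) //|]; by rewrite wval0 normr0 => /eqP; rewrite eqz_nat.
set q' := Ordinal (ltnW hq); rewrite -[wval w k]/(wval w q'.+1).
have adj j j' : wabs w j = i -> j' != j -> (i <= j')%N -> i.+1%:Z < `|wval w j'.+1|.
  by move=> e nj ij; rewrite normr_wvalS ltz_nat ltnS (first_moved_gt sw mi e).
split=> h; have e := absE _ h; have ik := first_moved_lt mi e;
  by apply: adj e _ _; move: ik; rewrite /k /q' -?val_eqE /=; lia.
Qed.

Lemma descB_mul_flip w i :
  signed_perm w -> first_moved w i -> descB (w * sign_flip i)%g = descB w.
Proof.
move=> sw mi; apply/setP => k; rewrite !inE !wval_mul_flip.
have [h1 h2] := first_moved_neighbors k sw mi.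
have [e1|n1] := eqVneq `|wval w k.+1| i.+1%:Z.
  by rewrite (gt_eqF (h1 e1)) ltrNl_norm // e1 h1.
have [e2|//] := eqVneq `|wval w k| i.+1%:Z.
by rewrite ltrNr_norm // e2 h2.
Qed.

Lemma descB_toggle w : signed_perm w -> descB (toggle w) = descB w.
Proof. by rewrite /toggle; case: pickP => // i mi sw; apply: descB_mul_flip. Qed.

Lemma toggle_fixed w : toggle w = w -> wabs w =1 id.
Proof.
move=> tw j; apply/eqP/negPn/negP => nj.
case: (@arg_minnP _ j (fun k => wabs w k != k) val nj) => i ni imin.
have mi : first_moved w i.
  apply/andP; split=> //; apply/forallP => k; apply/implyP => ki.
  by apply: contraTT ki => /imin; rewrite -leqNgt.
move: tw; rewrite /toggle; case: pickP => [i' _ | /(_ i)]; last by rewrite mi.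
move/(congr1 (fun v => (w^-1 * v)%g (i', false))).
by rewrite mulKg permM tpermL permKV => -[].
Qed.

Lemma normr_wval_fixed w (j : nat) : wabs w =1 id -> (j <= n)%N -> `|wval w j| = j%:Z.
Proof.
move=> fw; case: j => [|j] hj; first by rewrite wval0.
by rewrite (normr_wvalS w (Ordinal hj)) fw.
Qed.

Lemma descB_fixed w k : wabs w =1 id -> (k \in descB w) = (w (k, false)).2.
Proof.
move=> fw; rewrite inE wvalS.
have := normr_wval_fixed fw (ltnW (ltn_ord k)).
have := fw k; rewrite /wabs; case: (w (k, false)) => m b /= ->.
by rewrite /sval /=; case: b; lia.
Qed.

Lemma fixed_perm_inj w1 w2 : signed_perm w1 -> signed_perm w2 ->
  wabs w1 =1 id -> wabs w2 =1 id -> descB w1 = descB w2 -> w1 = w2.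
Proof.
move=> s1 s2 f1 f2 d.
have e k : w1 (k, false) = w2 (k, false).
  apply/eqP; rewrite -pair_eqE /= -/(wabs w1 k) -/(wabs w2 k) f1 f2 eqxx /=.
  by rewrite -!descB_fixed // d.
apply/permP => -[k []]; last exact: e.
by rewrite -[(k, true)]/(sneg (k, false)) !signed_permN // e.
Qed.

Definition sign_by S x : sidx n := (x.1, x.2 (+) (x.1 \in S)).

Lemma sign_byK S : involutive (sign_by S).
Proof. by case=> m b; rewrite /sign_by /= addbK. Qed.

Definition diag_perm S : {perm sidx n} := perm (inv_inj (sign_byK S)).

Lemma signed_perm_diag S : signed_perm (diag_perm S).
Proof. by apply/forallP => -[m b]; rewrite !permE /sign_by /sneg /= addNb. Qed.

Lemma wabs_diag S : wabs (diag_perm S) =1 id.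
Proof. by move=> k; rewrite /wabs permE. Qed.

Lemma descB_diag S : descB (diag_perm S) = S.
Proof. by apply/setP => k; rewrite descB_fixed /diag_perm ?permE //; apply: wabs_diag. Qed.

Lemma odd_card_descB S : odd #|[set w | signed_perm w & descB w == S]|.
Proof.
rewrite (odd_card_involution toggleK); last first.
  by move=> w; rewrite !inE => /andP[sw dw]; rewrite signed_perm_toggle ?descB_toggle.
suff -> : [set w in [set w | signed_perm w & descB w == S] | toggle w == w] = [set diag_perm S].
  by rewrite cards1.
apply/setP => w; rewrite !inE; apply/idP/eqP => [/andP[/andP[sw /eqP dw] /eqP tw]|->].
  apply: fixed_perm_inj; rewrite ?signed_perm_diag ?descB_diag //; last exact: wabs_diag.
  exact: toggle_fixed.
rewrite signed_perm_diag descB_diag eqxx /=; apply/eqP.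
by rewrite /toggle; case: pickP => // i /andP[/negP []]; rewrite wabs_diag.
Qed.
End SignedPerm.

Theorem corollary4p2 (n : nat) (hn : 0 < n) :
  (forall a : seq nat, pseudo_comp n a -> odd (rB n a)) /\
  cB 2 0 n = 0 /\ cB 2 1 n = 2 ^ n.
Proof.
have odd_rB a : odd (rB n a) := odd_card_descB (descC n a).
split=> [a _ //|]; rewrite /cB -count_pseudo_comp; split.
  by rewrite (@eq_count _ _ pred0) ?count_pred0 // => a; rewrite /= modn2 odd_rB andbF.
by apply: eq_count => a; rewrite /= modn2 odd_rB andbT.
Qed.
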